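(* Let $(\mathcal X,\mathcal A,\mu)$ be a measurable space with $\sigma$-finite $\mu$, let $p_1,p_2$ be mutually absolutely continuous probability densities w.r.t. $\mu$, $B=p_1/p_2$, $\rho=\int\sqrt{p_1p_2}\,d\mu$. Let $X_1$ have density $p_1$ and $X_2$ have density $p_2$, independent, and define $\Delta_t=B(X_2)^t-B(X_1)^{t-1}$. Then $\mathrm{Var}(\Delta_{1/2})=2(1-\rho^2)<\infty$, whereas for every $t\neq 1/2$, $$\sup_{(p_1,p_2)\in\mathcal P_{\mathrm{ac}}}\mathrm{Var}(\Delta_t)=+\infty.$$
   Context: Mutual absolute continuity: $p_1(x)=0\iff p_2(x)=0$ for $\mu$-a.e. $x$. $\mathcal P_{\mathrm{ac}}$ denotes the class of all pairs of mutually absolutely continuous probability densities. Variances take values in $[0,\infty]$, equal to $+\infty$ when the second moment is infinite. *)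

From HB Require Import structures.
From mathcomp Require Import all_boot all_order all_algebra.
From mathcomp Require Import all_classical all_reals all_analysis.
Set Implicit Arguments. Unset Strict Implicit. Unset Printing Implicit Defensive.
Import Order.TTheory GRing.Theory Num.Theory.
Import numFieldNormedType.Exports.
Local Open Scope classical_set_scope.
Local Open Scope ring_scope.

Section hellinger_defs.
Context {R : realType} {d : measure_display} {T : measurableType d}.
Variable mu : {sigma_finite_measure set T -> \bar R}.

Definition is_density (p : T -> R) : Prop :=
  measurable_fun setT p /\ (forall x, 0 <= p x) /\ (\int[mu]_x (p x)%:E = 1)%E.

Definition mutually_ac (p1 p2 : T -> R) : Prop :=
  {ae mu, forall x, p1 x = 0 <-> p2 x = 0}.

Definition Pac (p1 p2 : T -> R) : Prop :=
  [/\ is_density p1, is_density p2 & mutually_ac p1 p2].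

Definition lratio (p1 p2 : T -> R) (x : T) : R := p1 x / p2 x.

Definition bhatt (p1 p2 : T -> R) : \bar R :=
  (\int[mu]_x (Num.sqrt (p1 x * p2 x))%:E)%E.

Definition Delta (t : R) (p1 p2 : T -> R) (z : T * T) : R :=
  lratio p1 p2 z.2 `^ t - lratio p1 p2 z.1 `^ (t - 1).

(* joint density of (X1, X2), X1 ~ p1, X2 ~ p2 independent, w.r.t. mu \x mu *)
Definition jdens (p1 p2 : T -> R) (z : T * T) : R := p1 z.1 * p2 z.2.

Definition jexpect (p1 p2 : T -> R) (f : T * T -> R) : \bar R :=
  (\int[mu \x mu]_z (f z * jdens p1 p2 z)%:E)%E.

(* variance of f(X1, X2), in [0, +oo]; +oo when f(X1,X2) is not integrable
   (hence has infinite second moment) *)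
Definition jvar (p1 p2 : T -> R) (f : T * T -> R) : \bar R :=
  if `[< (mu \x mu)%E.-integrable setT (fun z => (f z * jdens p1 p2 z)%:E) >]
  then (\int[mu \x mu]_z
          (((f z - fine (jexpect p1 p2 f)) ^+ 2) * jdens p1 p2 z)%:E)%E
  else +oo%E.

End hellinger_defs.

From HB Require Import structures.
From mathcomp Require Import all_boot all_order all_algebra.
From mathcomp Require Import all_classical all_reals all_analysis.
From mathcomp Require Import measurable_realfun ring lra.
Import Order.TTheory GRing.Theory Num.Theory.
Import numFieldNormedType.Exports.
Local Open Scope classical_set_scope.
Local Open Scope ring_scope.

(* For t = 1/2 write s = sqrt B, so that Delta_{1/2}(x1, x2) = s(x2) - 1/s(x1)
   and s p2 = p1 / s = sqrt (p1 p2).  Hence Delta_{1/2} has mean rho - rho = 0,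
   while E[s(X2)^2] = E[s(X1)^-2] = 1 because p1 and p2 vanish together, and
   E[s(X2)] E[1/s(X1)] = rho^2; the variance is therefore 2 - 2 rho^2.
   For t <> 1/2 take densities uniform on two disjoint sets A, B of finite
   positive measure, with masses (1/2, 1/2) and (1/(2k), 1 - 1/(2k)) (swapped
   when t < 1/2).  If Delta takes the values d1 and d2 on two rectangles of
   probability at least m, its variance is at least m ((d1 - d2)/2)^2, whatever
   its mean.  Here two such rectangles have probability at least 1/(4k) and
   values differing by at least k^s - 1 with s = max(t, 1 - t) > 1/2, so the
   variance is at least (k^s - 1)^2 / (16 k), which is unbounded in k. *)

Section product_integrals.
Context {R : realType} {d1 d2 : measure_display}.
Context {T1 : measurableType d1} {T2 : measurableType d2}.
Variables (mu1 : {sigma_finite_measure set T1 -> \bar R})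
  (mu2 : {sigma_finite_measure set T2 -> \bar R}).
Implicit Types (f : T1 -> R) (g : T2 -> R).

Lemma measurable_fun_prod_mul f g :
  measurable_fun setT f -> measurable_fun setT g ->
  measurable_fun setT (fun z : T1 * T2 => f z.1 * g z.2).
Proof.
move=> mf mg; apply: measurable_funM.
- exact: measurableT_comp mf measurable_fst.
- exact: measurableT_comp mg measurable_snd.
Qed.

Lemma ge0_integral_prod_mul f g :
  measurable_fun setT f -> measurable_fun setT g ->
  (forall x, 0 <= f x) -> (forall x, 0 <= g x) ->
  (\int[mu1 \x mu2]_z (f z.1 * g z.2)%:E
     = (\int[mu1]_x (f x)%:E) * (\int[mu2]_x (g x)%:E))%E.
Proof.
move=> mf mg f0 g0.
rewrite fubini_tonelli1 /fubini_F /=; last 2 first.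
- by apply/measurable_EFinP; exact: measurable_fun_prod_mul.
- by move=> z; rewrite lee_fin mulr_ge0.
transitivity (\int[mu1]_x ((f x)%:E * \int[mu2]_y (g y)%:E))%E.
  apply: eq_integral => x _; rewrite -ge0_integralZl_EFin //.
  - by move=> y _; rewrite lee_fin.
  - exact/measurable_EFinP.
rewrite ge0_integralZr //.
- exact/measurable_EFinP.
- by move=> x _; rewrite lee_fin.
- by apply: integral_ge0 => y _; rewrite lee_fin.
Qed.

Lemma integrable_prod_mul f g :
  measurable_fun setT f -> measurable_fun setT g ->
  (forall x, 0 <= f x) -> (forall x, 0 <= g x) ->
  (\int[mu1]_x (f x)%:E < +oo)%E -> (\int[mu2]_x (g x)%:E < +oo)%E ->
  (mu1 \x mu2)%E.-integrable setT (fun z => (f z.1 * g z.2)%:E).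
Proof.
move=> mf mg f0 g0 If Ig; apply/integrableP; split.
  by apply/measurable_EFinP; exact: measurable_fun_prod_mul.
under eq_integral do rewrite gee0_abs ?lee_fin ?mulr_ge0//.
rewrite ge0_integral_prod_mul //; apply: lte_mul_pinfty => //.
- by apply: integral_ge0 => x _; rewrite lee_fin.
- by rewrite ge0_fin_numE //; apply: integral_ge0 => x _; rewrite lee_fin.
Qed.

Lemma rect_le_ge0_integral (F : T1 * T2 -> R) (X : set T1) (Y : set T2) k :
  measurable X -> measurable Y ->
  measurable_fun setT F -> (forall z, 0 <= F z) ->
  (forall z, X z.1 -> Y z.2 -> F z = k) ->
  (k%:E * (mu1 X * mu2 Y) <= \int[mu1 \x mu2]_z (F z)%:E)%E.
Proof.
move=> mX mY mF F_ge0 FXY.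
rewrite -(product_measure1E mu1 mu2 mX mY) -integral_cst; last exact: measurableX.
rewrite (eq_integral (fun z => (F z)%:E)); last first.
  by move=> z /set_mem[Xz Yz]; rewrite /= FXY.
apply: ge0_subset_integral => //.
- exact: measurableX.
- exact/measurable_EFinP.
- by move=> z _; rewrite lee_fin.
Qed.

End product_integrals.

Section sqrt_ratio.
Context {R : rcfType}.
Implicit Types a b : R.

Lemma sqrtr_div_mulr a b : 0 <= a -> 0 <= b ->
  Num.sqrt (a / b) * b = Num.sqrt (a * b).
Proof.
move=> a0 b0; have [->|bn0] := eqVneq b 0; first by rewrite !mulr0 sqrtr0.
have -> : a * b = a / b * b ^+ 2 by field.
by rewrite [RHS]sqrtrM ?divr_ge0 // sqrtr_sqr ger0_norm.
Qed.

Lemma sqrtr_div_invMr a b : 0 <= a -> 0 <= b ->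
  (Num.sqrt (a / b))^-1 * a = Num.sqrt (a * b).
Proof.
move=> a0 b0; have [->|an0] := eqVneq a 0; first by rewrite !(mulr0, mul0r) sqrtr0.
by rewrite -sqrtrV ?divr_ge0 // invf_div sqrtr_div_mulr // mulrC.
Qed.

Lemma sqr_sqrtr_div_mulr a b : 0 <= a -> 0 <= b -> (b = 0 -> a = 0) ->
  Num.sqrt (a / b) ^+ 2 * b = a.
Proof.
move=> a0 b0 ab; rewrite sqr_sqrtr ?divr_ge0 //.
by have [b0'|bn0] := eqVneq b 0; [rewrite b0' ab // mulr0|rewrite divfK].
Qed.

Lemma sqr_sqrtr_div_invMr a b : 0 <= a -> 0 <= b -> (a = 0 -> b = 0) ->
  (Num.sqrt (a / b))^-1 ^+ 2 * a = b.
Proof.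
move=> a0 b0 ba; rewrite -sqrtrV ?divr_ge0 // invf_div.
exact: sqr_sqrtr_div_mulr.
Qed.

End sqrt_ratio.

Lemma sqr_half_sub_le_max {R : realFieldType} (x y c : R) :
  ((x - y) / 2) ^+ 2 <= Num.max ((x - c) ^+ 2) ((y - c) ^+ 2).
Proof.
have mean_le : ((x - y) / 2) ^+ 2 <= ((x - c) ^+ 2 + (y - c) ^+ 2) / 2.
  by have := sqr_ge0 (x + y - 2 * c); lra.
apply: (le_trans mean_le); rewrite le_max; apply/orP.
by have [?|?] := leP ((x - c) ^+ 2) ((y - c) ^+ 2); [right|left]; lra.
Qed.

Section likelihood_ratio.
Context {R : realType} {d : measure_display} {T : measurableType d}.
Variable mu : {sigma_finite_measure set T -> \bar R}.
Context {p1 p2 : T -> R}.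
Hypotheses (mp1 : measurable_fun setT p1) (mp2 : measurable_fun setT p2).
Hypotheses (p1_ge0 : forall x, 0 <= p1 x) (p2_ge0 : forall x, 0 <= p2 x).

Lemma lratio_ge0 x : 0 <= lratio p1 p2 x.
Proof. exact: divr_ge0. Qed.

Lemma measurable_lratio : measurable_fun setT (lratio p1 p2).
Proof.
rewrite (_ : lratio p1 p2 = fun x => p1 x * p2 x `^ (-1)); last first.
  by apply/funext => x; rewrite powR_inv1.
apply: measurable_funM => //.
exact: measurableT_comp (measurable_powR _) mp2.
Qed.

Lemma measurable_Delta t : measurable_fun setT (Delta t p1 p2).
Proof.
have mB t' := measurableT_comp (measurable_powR t') measurable_lratio.
apply: measurable_funB.
- exact: measurableT_comp (mB t) measurable_snd.
- exact: measurableT_comp (mB (t - 1)) measurable_fst.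
Qed.

Lemma Delta_half z : Delta (1 / 2) p1 p2 z
  = Num.sqrt (lratio p1 p2 z.2) - (Num.sqrt (lratio p1 p2 z.1))^-1.
Proof.
rewrite /Delta (_ : 1 / 2 - 1 = - 2^-1); last by field.
by rewrite powRN div1r !powR12_sqrt ?lratio_ge0.
Qed.

Lemma jvar_ge_two_rect t (X1 Y1 X2 Y2 : set T) (d1 d2 w1 w2 m : R) :
  measurable X1 -> measurable Y1 -> measurable X2 -> measurable Y2 ->
  (forall z, X1 z.1 -> Y1 z.2 -> Delta t p1 p2 z = d1 /\ jdens p1 p2 z = w1) ->
  (forall z, X2 z.1 -> Y2 z.2 -> Delta t p1 p2 z = d2 /\ jdens p1 p2 z = w2) ->
  0 <= m -> (m%:E <= w1%:E * (mu X1 * mu Y1))%E ->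
  (m%:E <= w2%:E * (mu X2 * mu Y2))%E ->
  ((m * ((d1 - d2) / 2) ^+ 2)%:E <= jvar mu p1 p2 (Delta t p1 p2))%E.
Proof.
move=> mX1 mY1 mX2 mY2 cell1 cell2 m0 mass1 mass2.
rewrite /jvar; case: asboolP => _; last exact: leey.
set c := fine _.
have mF : measurable_fun setT
    (fun z => (Delta t p1 p2 z - c) ^+ 2 * jdens p1 p2 z).
  apply: measurable_funM; last exact: measurable_fun_prod_mul.
  by apply: measurable_funX; apply: measurable_funB => //; exact: measurable_Delta.
have F_ge0 z : 0 <= (Delta t p1 p2 z - c) ^+ 2 * jdens p1 p2 z.
  by rewrite mulr_ge0 ?sqr_ge0 ?mulr_ge0.
have from_cell (X Y : set T) dd w : measurable X -> measurable Y ->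
    (forall z, X z.1 -> Y z.2 -> Delta t p1 p2 z = dd /\ jdens p1 p2 z = w) ->
    (m%:E <= w%:E * (mu X * mu Y))%E -> ((d1 - d2) / 2) ^+ 2 <= (dd - c) ^+ 2 ->
    ((m * ((d1 - d2) / 2) ^+ 2)%:E <=
      \int[mu \x mu]_z (((Delta t p1 p2 z - c) ^+ 2 * jdens p1 p2 z)%:E))%E.
  move=> mX mY cell mass gap; apply: le_trans; last first.
    apply: (rect_le_ge0_integral mu mu _ _ _ ((dd - c) ^+ 2 * w) mX mY mF F_ge0).
    by move=> z Xz Yz; have [-> ->] := cell z Xz Yz.
  rewrite (mulrC m) (EFinM _ m) (EFinM ((dd - c) ^+ 2)) -muleA.
  by apply: lee_pmul; rewrite ?lee_fin ?sqr_ge0.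
(* Whatever the mean c, d1 or d2 lies at distance >= |d1 - d2| / 2 from c. *)
have := sqr_half_sub_le_max d1 d2 c; rewrite le_max => /orP[gap|gap].
- exact: (from_cell X1 Y1 d1 w1).
- exact: (from_cell X2 Y2 d2 w2).
Qed.

End likelihood_ratio.

Section bhattacharyya_variance.
Context {R : realType} {d : measure_display} {T : measurableType d}.
Variable mu : {sigma_finite_measure set T -> \bar R}.
Context {p1 p2 : T -> R}.
Hypothesis p12 : Pac mu p1 p2.

Let mp1 : measurable_fun setT p1. Proof. by case: p12 => -[]. Qed.
Let mp2 : measurable_fun setT p2. Proof. by case: p12 => _ []. Qed.
Let p1_ge0 x : 0 <= p1 x. Proof. by case: p12 => -[_ []]. Qed.
Let p2_ge0 x : 0 <= p2 x. Proof. by case: p12 => _ [_ []]. Qed.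
Let int_p1 : (\int[mu]_x (p1 x)%:E = 1)%E. Proof. by case: p12 => -[_ []]. Qed.
Let int_p2 : (\int[mu]_x (p2 x)%:E = 1)%E. Proof. by case: p12 => _ [_ []]. Qed.
Let p1_p2_ac : {ae mu, forall x, p1 x = 0 <-> p2 x = 0}. Proof. by case: p12. Qed.

Let s x := Num.sqrt (lratio p1 p2 x).
Let h x := Num.sqrt (p1 x * p2 x).
Let q1 x := s x ^+ 2 * p2 x.
Let q2 x := (s x)^-1 ^+ 2 * p1 x.

Let h_ge0 x : 0 <= h x. Proof. exact: sqrtr_ge0. Qed.
Let q1_ge0 x : 0 <= q1 x. Proof. by rewrite mulr_ge0 ?sqr_ge0. Qed.
Let q2_ge0 x : 0 <= q2 x. Proof. by rewrite mulr_ge0 ?sqr_ge0. Qed.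

Let mh : measurable_fun setT h.
Proof.
rewrite (_ : h = fun x => (p1 x * p2 x) `^ 2^-1); last first.
  by apply/funext => x; rewrite powR12_sqrt ?mulr_ge0.
exact: measurableT_comp (measurable_powR _) (measurable_funM mp1 mp2).
Qed.

Let ms : measurable_fun setT s.
Proof.
rewrite (_ : s = fun x => lratio p1 p2 x `^ 2^-1); last first.
  by apply/funext => x; rewrite powR12_sqrt ?lratio_ge0.
exact: measurableT_comp (measurable_powR _) (measurable_lratio mp1 mp2 p2_ge0).
Qed.

Let ms_inv : measurable_fun setT (fun x => (s x)^-1).
Proof.
rewrite (_ : (fun x => _) = fun x => lratio p1 p2 x `^ (- 2^-1)); last first.
  by apply/funext => x; rewrite powRN powR12_sqrt ?lratio_ge0.
exact: measurableT_comp (measurable_powR _) (measurable_lratio mp1 mp2 p2_ge0).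
Qed.

Let mq1 : measurable_fun setT q1.
Proof. exact: measurable_funM (measurable_funX _ ms) mp2. Qed.

Let mq2 : measurable_fun setT q2.
Proof. exact: measurable_funM (measurable_funX _ ms_inv) mp1. Qed.

Lemma bhatt_fin_num : bhatt mu p1 p2 \is a fin_num.
Proof.
rewrite ge0_fin_numE; last by apply: integral_ge0 => x _; rewrite lee_fin.
have h_le x : h x <= p1 x + p2 x.
  rewrite -[leRHS]ger0_norm ?addr_ge0 // -sqrtr_sqr ler_sqrt ?sqr_ge0 //.
  by have := p1_ge0 x; have := p2_ge0 x; nra.
apply: (@le_lt_trans _ _ (\int[mu]_x ((p1 x)%:E + (p2 x)%:E))%E).
  apply: ge0_le_integral => //.
  - exact/measurable_EFinP.
  - by apply: emeasurable_funD; apply/measurable_EFinP.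
  - by move=> x _; rewrite -EFinD lee_fin h_le.
rewrite ge0_integralD //.
- by rewrite int_p1 int_p2 -EFinD ltry.
- by move=> x _; rewrite lee_fin.
- exact/measurable_EFinP.
- by move=> x _; rewrite lee_fin.
- exact/measurable_EFinP.
Qed.

Let rho := fine (bhatt mu p1 p2).
Let int_h : (\int[mu]_x (h x)%:E = rho%:E)%E.
Proof. by rewrite fineK ?bhatt_fin_num. Qed.

Let int_q1 : (\int[mu]_x (q1 x)%:E = 1)%E.
Proof.
rewrite -int_p1; apply: ae_eq_integral => //; try exact/measurable_EFinP.
apply: filterS p1_p2_ac => x [_ p2_p1] _.
by rewrite /q1 /s sqr_sqrtr_div_mulr.
Qed.

Let int_q2 : (\int[mu]_x (q2 x)%:E = 1)%E.
Proof.
rewrite -int_p2; apply: ae_eq_integral => //; try exact/measurable_EFinP.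
apply: filterS p1_p2_ac => x [p1_p2 _] _.
by rewrite /q2 /s sqr_sqrtr_div_invMr.
Qed.

Let s_p2 x : s x * p2 x = h x.
Proof. exact: sqrtr_div_mulr. Qed.

Let inv_s_p1 x : (s x)^-1 * p1 x = h x.
Proof. exact: sqrtr_div_invMr. Qed.

Let Delta_half_jdens z :
  Delta (1 / 2) p1 p2 z * jdens p1 p2 z = p1 z.1 * h z.2 - h z.1 * p2 z.2.
Proof.
rewrite (Delta_half p1_ge0 p2_ge0) -/(s z.1) -/(s z.2) /jdens.
by rewrite -(s_p2 z.2) -(inv_s_p1 z.1); ring.
Qed.

Let Delta_half_sqr_jdens z :
  Delta (1 / 2) p1 p2 z ^+ 2 * jdens p1 p2 z + 2 * (h z.1 * h z.2)
    = p1 z.1 * q1 z.2 + q2 z.1 * p2 z.2.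
Proof.
rewrite (Delta_half p1_ge0 p2_ge0) -/(s z.1) -/(s z.2) /jdens /q1 /q2.
by rewrite -(s_p2 z.2) -(inv_s_p1 z.1); ring.
Qed.

Let integrable_p1_h :
  (mu \x mu)%E.-integrable setT (fun z => (p1 z.1 * h z.2)%:E).
Proof.
by apply: integrable_prod_mul => //; rewrite ?int_p1 ?int_h ltry.
Qed.

Let integrable_h_p2 :
  (mu \x mu)%E.-integrable setT (fun z => (h z.1 * p2 z.2)%:E).
Proof.
by apply: integrable_prod_mul => //; rewrite ?int_p2 ?int_h ltry.
Qed.

Lemma integrable_Delta_half :
  (mu \x mu)%E.-integrable setT
    (fun z => (Delta (1 / 2) p1 p2 z * jdens p1 p2 z)%:E).
Proof.
apply: (eq_integrable _ _ _ _ (integrableB _ integrable_p1_h integrable_h_p2)) => //.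
by move=> z _; rewrite Delta_half_jdens EFinB.
Qed.

Lemma jexpect_Delta_half : jexpect mu p1 p2 (Delta (1 / 2) p1 p2) = 0%E.
Proof.
rewrite /jexpect; under eq_integral do rewrite Delta_half_jdens EFinB.
rewrite integralB_EFin // !ge0_integral_prod_mul // int_p1 int_p2 int_h.
by rewrite mul1e mule1 subee.
Qed.

Let bhattE : bhatt mu p1 p2 = rho%:E.
Proof. by rewrite fineK ?bhatt_fin_num. Qed.

Lemma jvar_Delta_half : jvar mu p1 p2 (Delta (1 / 2) p1 p2)
  = (2%:E * (1%:E - bhatt mu p1 p2 * bhatt mu p1 p2))%E.
Proof.
rewrite /jvar asboolT; last exact: integrable_Delta_half.
rewrite jexpect_Delta_half /=; under eq_integral do rewrite subr0.
set V := (\int[_]_z _)%E.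
have int_hh : (\int[mu \x mu]_z ((2 * (h z.1 * h z.2))%:E)
    = (2 * (rho * rho))%:E)%E.
  under eq_integral do rewrite EFinM.
  rewrite ge0_integralZl_EFin //.
  - by rewrite ge0_integral_prod_mul // int_h -EFinM.
  - by move=> z _; rewrite lee_fin mulr_ge0.
  - by apply/measurable_EFinP; exact: measurable_fun_prod_mul.
have V_hh : (V + (2 * (rho * rho))%:E = 2%:E)%E.
  rewrite -int_hh -ge0_integralD //.
  - under eq_integral do rewrite -EFinD Delta_half_sqr_jdens EFinD.
    rewrite ge0_integralD // ?ge0_integral_prod_mul //.
    + by rewrite int_p1 int_p2 int_q1 int_q2 !mul1e -EFinD.
    + by move=> z _; rewrite lee_fin mulr_ge0.
    + by apply/measurable_EFinP; exact: measurable_fun_prod_mul.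
    + by move=> z _; rewrite lee_fin mulr_ge0.
    + by apply/measurable_EFinP; exact: measurable_fun_prod_mul.
  - by move=> z _; rewrite lee_fin mulr_ge0 ?sqr_ge0 ?mulr_ge0.
  - apply/measurable_EFinP; apply: measurable_funM.
    + by apply: measurable_funX; apply: measurable_Delta.
    + exact: measurable_fun_prod_mul.
  - by move=> z _; rewrite lee_fin !mulr_ge0.
  - apply/measurable_EFinP; apply: measurable_funM => //.
    exact: measurable_fun_prod_mul.
have -> : V = (2%:E - (2 * (rho * rho))%:E)%E by rewrite -V_hh addeK.
by rewrite bhattE -[(rho%:E * _)%E]EFinM -!EFinB -EFinM; congr EFin; ring.
Qed.

Lemma jvar_Delta_half_lt_pinfty : (jvar mu p1 p2 (Delta (1 / 2) p1 p2) < +oo)%E.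
Proof. by rewrite jvar_Delta_half bhattE -[(rho%:E * _)%E]EFinM -EFinB -EFinM ltry. Qed.

End bhattacharyya_variance.

Lemma powR_gap_unbounded {R : realType} (s M : R) : 1 / 2 < s ->
  exists2 k : R, 1 <= k & M <= (k `^ s - 1) ^+ 2 / (16 * k).
Proof.
move=> s_gt; set u := 2 * s - 1; have u_gt0 : 0 < u by rewrite /u; lra.
set K := Num.max 4 (64 * M).
have K_ge4 : 4 <= K by rewrite le_max lexx.
have K_geM : 64 * M <= K by rewrite le_max lexx orbT.
(* k ^ (2s - 1) = K, so k ^ (2s) = k K;
   then k ^ s >= 2 gives (k ^ s - 1) ^ 2 >= k ^ (2s) / 4. *)
set k := K `^ u^-1.
have k_ge1 : 1 <= k by rewrite -(powRr0 K) ler_powR ?invr_ge0 ?ltW //; lra.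
have k_gt0 : 0 < k by lra.
exists k => //.
have sqr_ks : k `^ s ^+ 2 = k * K.
  rewrite -powR_mulrn ?powR_ge0 // -powRrM (_ : s * 2%:R = 1 + u); last first.
    by rewrite /u; lra.
  rewrite powRD; last by rewrite (gt_eqF k_gt0) implybT.
  rewrite powRr1 ?ltW // /k -powRrM mulVf ?gt_eqF // powRr1 //; lra.
have ks_ge2 : 2 <= k `^ s.
  have : 4 <= k `^ s ^+ 2 by rewrite sqr_ks; nra.
  by have := powR_ge0 k s; nra.
rewrite ler_pdivlMr; last lra.
have : k `^ s ^+ 2 <= 4 * (k `^ s - 1) ^+ 2 by nra.
by rewrite sqr_ks; nra.
Qed.

Section two_point_family.
Context {R : realType} {d : measure_display} {T : measurableType d}.
Variable mu : {sigma_finite_measure set T -> \bar R}.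
Variables A B : set T.
Hypotheses (mA : measurable A) (mB : measurable B) (AB0 : A `&` B = set0).
Hypotheses (muA : (0 < mu A < +oo)%E) (muB : (0 < mu B < +oo)%E).

Let cell (c : bool) := if c then A else B.
Let size (c : bool) := fine (mu (cell c)).
Let mass (g : R) (c : bool) := if c then g else 1 - g.

Let measurable_cell c : measurable (cell c).
Proof. by case: c. Qed.

Let mu_cell c : mu (cell c) = (size c)%:E.
Proof.
by rewrite fineK // ge0_fin_numE //; case: c; [case/andP: muA|case/andP: muB].
Qed.

Let size_gt0 c : 0 < size c.
Proof. by rewrite -lte_fin -mu_cell; case: c; [case/andP: muA|case/andP: muB]. Qed.

Let two_point (g : R) (x : T) : R :=
  mass g true / size true * \1_A x + mass g false / size false * \1_B x.

Let two_point_cell g c x : cell c x -> two_point g x = mass g c / size c.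
Proof.
have AB x' : A x' -> B x' -> False.
  by move=> Ax Bx; rewrite -[False]/(set0 x') -AB0.
rewrite /two_point !indicE; case: c => /= Cx.
- by rewrite mem_set // memNset ?mulr1 ?mulr0 ?addr0 // => /(AB _ Cx).
- by rewrite memNset ?mem_set ?mulr1 ?mulr0 ?add0r // => /AB; apply.
Qed.

Let two_point_out g x : ~ A x -> ~ B x -> two_point g x = 0.
Proof. by move=> nA nB; rewrite /two_point !indicE !memNset // !mulr0 addr0. Qed.

Let mass_gt0 g c : 0 < g < 1 -> 0 < mass g c.
Proof. by case/andP; case: c => /= g0 g1; rewrite ?subr_gt0. Qed.

Let cell_term_ge0 g c (C : set T) x :
  0 < g < 1 -> 0 <= mass g c / size c * \1_C x.
Proof.
move=> g01; apply: mulr_ge0; last by rewrite indicE.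
by rewrite divr_ge0 // ltW ?mass_gt0 ?size_gt0.
Qed.

Let two_point_ge0 g x : 0 < g < 1 -> 0 <= two_point g x.
Proof. by move=> g01; rewrite addr_ge0 ?cell_term_ge0. Qed.

Let measurable_two_point g : measurable_fun setT (two_point g).
Proof.
by apply: measurable_funD; apply: measurable_funM => //; exact: measurable_indic.
Qed.

Let integral_two_point g : 0 < g < 1 -> (\int[mu]_x (two_point g x)%:E = 1)%E.
Proof.
move=> g01; have int_cell c (C : set T) : measurable C ->
    (\int[mu]_x ((mass g c / size c * \1_C x)%:E)
       = (mass g c / size c)%:E * mu C)%E.
  move=> mC; under eq_integral do rewrite EFinM.
  rewrite ge0_integralZl_EFin ?integral_indic ?setIT //.
  - exact/measurable_EFinP/measurable_indic.
  - by rewrite divr_ge0 // ltW ?mass_gt0 ?size_gt0.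
under eq_integral do rewrite EFinD.
rewrite ge0_integralD //.
- rewrite (int_cell true A mA) (int_cell false B mB).
  rewrite -[A]/(cell true) -[B]/(cell false) !mu_cell -!EFinM -EFinD /=.
  by congr EFin; field; rewrite !gt_eqF.
- by move=> x _; rewrite lee_fin cell_term_ge0.
- exact/measurable_EFinP/measurable_funM.
- by move=> x _; rewrite lee_fin cell_term_ge0.
- exact/measurable_EFinP/measurable_funM.
Qed.

Let two_point_eq0 g x : 0 < g < 1 -> two_point g x = 0 <-> ~ (A x \/ B x).
Proof.
move=> g01.
have cell_neq0 c : cell c x -> two_point g x <> 0.
  move=> Cx; rewrite (two_point_cell _ c _ Cx) => /eqP.
  by rewrite mulf_eq0 invr_eq0 !gt_eqF ?mass_gt0 ?size_gt0.
split => [tp0 [Ax|Bx]|nAB].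
- exact: (cell_neq0 true).
- exact: (cell_neq0 false).
- by rewrite two_point_out // => ?; apply: nAB; [left|right].
Qed.

Let Pac_two_point g h :
  0 < g < 1 -> 0 < h < 1 -> Pac mu (two_point g) (two_point h).
Proof.
move=> g01 h01; split; [split|split|].
- exact: measurable_two_point.
- by split; [move=> x; exact: two_point_ge0|exact: integral_two_point].
- exact: measurable_two_point.
- by split; [move=> x; exact: two_point_ge0|exact: integral_two_point].
- by apply: aeW => x; rewrite !two_point_eq0.
Qed.

Let half01 : 0 < (1 / 2 : R) < 1.
Proof. by apply/andP; split; lra. Qed.

Let ratio g h c := mass g c / mass h c.

Let var_two_point t g h :=
  jvar mu (two_point g) (two_point h) (Delta t (two_point g) (two_point h)).

Let jvar_two_point_ge t g h (c1 c2 c1' c2' : bool) (m : R) :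
  0 < g < 1 -> 0 < h < 1 -> 0 <= m ->
  m <= mass g c1 * mass h c2 -> m <= mass g c1' * mass h c2' ->
  ((m * ((ratio g h c2 `^ t - ratio g h c1 `^ (t - 1)
          - (ratio g h c2' `^ t - ratio g h c1' `^ (t - 1))) / 2) ^+ 2)%:E
    <= var_two_point t g h)%E.
Proof.
move=> g01 h01 m0 mass1 mass2.
have on_cells c c' z : cell c z.1 -> cell c' z.2 ->
    Delta t (two_point g) (two_point h) z
      = ratio g h c' `^ t - ratio g h c `^ (t - 1)
    /\ jdens (two_point g) (two_point h) z
      = mass g c / size c * (mass h c' / size c').
  move=> Cz1 Cz2; rewrite /Delta /lratio /jdens.
  rewrite (two_point_cell g _ _ Cz1) (two_point_cell h _ _ Cz1).
  rewrite (two_point_cell g _ _ Cz2) (two_point_cell h _ _ Cz2).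
  by split=> //; rewrite /ratio !invf_div !mulrA !divfK ?gt_eqF ?size_gt0.
have cell_mass c c' : m <= mass g c * mass h c' ->
    (m%:E <= (mass g c / size c * (mass h c' / size c'))%:E
             * (mu (cell c) * mu (cell c')))%E.
  move=> mass_cc'; rewrite !mu_cell -!EFinM lee_fin.
  by rewrite mulf_div divfK // mulf_neq0 // gt_eqF ?size_gt0.
apply: (jvar_ge_two_rect mu (measurable_two_point g) (measurable_two_point h)
  (fun x => two_point_ge0 g x g01) (fun x => two_point_ge0 h x h01) t
  (cell c1) (cell c2) (cell c1') (cell c2')).
1-4: exact: measurable_cell.
- exact: on_cells.
- exact: on_cells.
- exact: m0.
- exact: cell_mass.
- exact: cell_mass.
Qed.

Let half_inv_mass (k : R) : 1 <= k -> 0 < 1 / (2 * k) < 1.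
Proof.
move=> k_ge1; rewrite divr_gt0 ?mulr_gt0 //=; last lra.
by rewrite ltr_pdivrMr ?mulr_gt0 //; lra.
Qed.

Let gap_sqr_le (X y k : R) : 0 < k -> 1 <= X -> 0 <= y <= 1 ->
  (X - 1) ^+ 2 / (16 * k) <= 1 / (4 * k) * ((X - y) / 2) ^+ 2.
Proof.
move=> k_gt0 X_ge1 /andP[y_ge0 y_le1].
rewrite (_ : 1 / (4 * k) * _ = (X - y) ^+ 2 / (16 * k)); last first.
  by field; rewrite gt_eqF.
by apply: ler_wpM2r; [rewrite invr_ge0 mulr_ge0 ?ltW|nra].
Qed.

Let jvar_two_point_gt (t k : R) : 1 / 2 < t -> 1 <= k ->
  (((k `^ t - 1) ^+ 2 / (16 * k))%:E <= var_two_point t (1 / 2) (1 / (2 * k)))%E.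
Proof.
move=> t_gt k_ge1; have k_gt0 : 0 < k by lra.
have h01 := half_inv_mass k k_ge1; set h := 1 / (2 * k) in h01 *.
have h_le : h <= 1 / 2 by rewrite /h ler_pdivrMr ?mulr_gt0 //; lra.
have m_eq : 1 / (4 * k) = 1 / 2 * h by rewrite /h; field; rewrite gt_eqF.
apply: le_trans (jvar_two_point_ge t (1 / 2) h true true true false (1 / (4 * k))
  half01 h01 _ _ _); first 1 last.
- by rewrite divr_ge0 ?mulr_ge0 //; lra.
- by rewrite m_eq.
- by rewrite /mass m_eq ler_pM2l //; lra.
have r_true : ratio (1 / 2) h true = k.
  by rewrite /ratio /= /h; field; rewrite gt_eqF.
have r_false : 0 < ratio (1 / 2) h false <= 1.
  by rewrite /ratio /= divr_gt0 ?ler_pdivrMr /=; lra.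
rewrite r_true opprB addrA subrK lee_fin; apply: gap_sqr_le => //.
- by rewrite -[leLHS](powRr0 k); apply: ler_powR; lra.
- rewrite powR_ge0 -[leRHS](powRr0 (ratio (1 / 2) h false)) /=.
  by apply: (ger_powR r_false); lra.
Qed.

Let jvar_two_point_lt (t k : R) : t < 1 / 2 -> 1 <= k ->
  (((k `^ (1 - t) - 1) ^+ 2 / (16 * k))%:E
    <= var_two_point t (1 / (2 * k)) (1 / 2))%E.
Proof.
move=> t_lt k_ge1; have k_gt0 : 0 < k by lra.
have g01 := half_inv_mass k k_ge1; set g := 1 / (2 * k) in g01 *.
have g_le : g <= 1 / 2 by rewrite /g ler_pdivrMr ?mulr_gt0 //; lra.
have m_eq : 1 / (4 * k) = g * (1 / 2) by rewrite /g; field; rewrite gt_eqF.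
apply: le_trans (jvar_two_point_ge t g (1 / 2) true true false true (1 / (4 * k))
  g01 half01 _ _ _); first 1 last.
- by rewrite divr_ge0 ?mulr_ge0 //; lra.
- by rewrite m_eq.
- by rewrite /mass m_eq ler_pM2r //; lra.
have r_true : ratio g (1 / 2) true `^ (t - 1) = k `^ (1 - t).
  rewrite (_ : ratio _ _ _ = k `^ (-1)); last first.
    by rewrite powR_inv1 ?ltW // /ratio /= /g; field; rewrite gt_eqF.
  by rewrite -powRrM; congr (_ `^ _); ring.
have r_false : 1 <= ratio g (1 / 2) false.
  by rewrite /ratio /= ler_pdivlMr; lra.
set y := ratio g (1 / 2) false `^ (t - 1).
set a := ratio g (1 / 2) true `^ t.
rewrite r_true (_ : a - _ - (a - y) = - (k `^ (1 - t) - y)); last by ring.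
rewrite mulNr sqrrN lee_fin; apply: gap_sqr_le => //.
- by rewrite -[leLHS](powRr0 k); apply: ler_powR; lra.
- rewrite powR_ge0 -[leRHS](powRr0 (ratio g (1 / 2) false)) /=.
  by apply: (ler_powR r_false); lra.
Qed.

Lemma jvar_Delta_unbounded t M : t != 1 / 2 ->
  exists p1 p2 : T -> R, Pac mu p1 p2 /\ (M%:E <= jvar mu p1 p2 (Delta t p1 p2))%E.
Proof.
rewrite neq_lt => /orP[t_lt|t_gt].
- have s_gt : 1 / 2 < 1 - t by lra.
  have [k k_ge1 Mk] := powR_gap_unbounded (1 - t) M s_gt.
  exists (two_point (1 / (2 * k))), (two_point (1 / 2)); split.
    exact: Pac_two_point (half_inv_mass k k_ge1) half01.
  by apply: le_trans (jvar_two_point_lt t k t_lt k_ge1); rewrite lee_fin.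
- have [k k_ge1 Mk] := powR_gap_unbounded t M t_gt.
  exists (two_point (1 / 2)), (two_point (1 / (2 * k))); split.
    exact: Pac_two_point half01 (half_inv_mass k k_ge1).
  by apply: le_trans (jvar_two_point_gt t k t_gt k_ge1); rewrite lee_fin.
Qed.

End two_point_family.

Theorem lemma4 (R : realType) (d : measure_display) (T : measurableType d)
    (mu : {sigma_finite_measure set T -> \bar R}) :
  (forall p1 p2 : T -> R, Pac mu p1 p2 ->
     jvar mu p1 p2 (Delta (1 / 2) p1 p2)
       = (2%:E * (1%:E - bhatt mu p1 p2 * bhatt mu p1 p2))%E
     /\ (jvar mu p1 p2 (Delta (1 / 2) p1 p2) < +oo)%E)
  /\
  ((exists A B : set T, [/\ measurable A, measurable B, A `&` B = set0,
        (0 < mu A < +oo)%E & (0 < mu B < +oo)%E]) ->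
   forall t : R, t != 1 / 2 ->
     ereal_sup [set v | exists p1 p2 : T -> R,
                  Pac mu p1 p2 /\ v = jvar mu p1 p2 (Delta t p1 p2)] = +oo%E).
Proof.
split=> [p1 p2 p12|[A [B [mA mB AB0 muA muB]]] t t_neq].
  by split; [exact: jvar_Delta_half|exact: jvar_Delta_half_lt_pinfty].
apply: eq_infty => M.
have [p1 [p2 [p12 leM]]] := jvar_Delta_unbounded mu A B mA mB AB0 muA muB t M t_neq.
by apply: le_trans leM (ereal_sup_ubound _); exists p1, p2.
Qed.
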